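(* Let $X_1,X_2$ be Banach spaces and let $\Phi$ be a Young function satisfying the Mulholland condition. Then the $F$-space $(X_1\oplus X_2,d_\Phi)$ has the Hahn–Banach extension property: for every closed subspace $M$ and every continuous linear functional $\varphi:M\to\mathbb C$ there is a continuous linear functional $\varphi':X_1\oplus X_2\to\mathbb C$ with $\varphi'|_M=\varphi$.
   Context: A Young function is a convex, left semicontinuous, even $\Phi:\mathbb R\to[0,\infty]$ with $\Phi(0)=0$, $\lim_{x\to\infty}\Phi(x)=\infty$; it satisfies the Mulholland condition if it is continuous and strictly increasing on $[0,\infty)$ and $\log\Phi(x)$ is convex as a function of $\log x$. The metric is $d_\Phi((x_1,x_2),(y_1,y_2))=\Phi^{-1}(\Phi(\|x_1-y_1\|)+\Phi(\|x_2-y_2\|))$, where $\Phi^{-1}$ is the inverse of $\Phi|_{[0,\infty)}$. *)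

From mathcomp Require Import all_boot all_order all_algebra.
From mathcomp Require Import all_classical all_reals all_analysis.
From mathcomp Require Export complex.
Import Order.TTheory GRing.Theory Num.Theory numFieldNormedType.Exports.

Set Implicit Arguments.
Unset Strict Implicit.
Unset Printing Implicit Defensive.

Local Open Scope classical_set_scope.
Local Open Scope ring_scope.

Section Young.
Variable R : realType.
Implicit Types (Phi : R -> \bar R).

Definition young_function Phi : Prop :=
  [/\ (forall x, (0 <= Phi x)%E) /\ Phi 0 = 0%E,
      (forall x y (l : R), 0 < l < 1 ->
         (Phi (l * x + (1 - l) * y)%R <= l%:E * Phi x + (1 - l)%:E * Phi y)%E),
      lower_semicontinuous Phi,
      (forall x, Phi (- x) = Phi x) &
      (forall M : R, exists N : R, forall x, N < x -> (M%:E < Phi x)%E)].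

Definition mulholland Phi : Prop :=
  [/\ {within `[0, +oo[, continuous Phi},
      (forall x y, 0 <= x -> x < y -> (Phi x < Phi y)%E) &
      (forall s t (l : R), 0 <= l <= 1 ->
         ln (fine (Phi (expR (l * s + (1 - l) * t))))
           <= l * ln (fine (Phi (expR s))) + (1 - l) * ln (fine (Phi (expR t))))].

Definition Phi_inv Phi (y : \bar R) : R := xget 0 [set t | 0 <= t /\ Phi t = y].

End Young.

Section DPhi.
Variables (R : realType) (X1 X2 : normedModType R[i]).

(* the real-valued norm (the norm of a normedModType over R[i] is valued in R[i]
   and is a nonnegative real, we take its real part). *)
Definition rnorm (X : normedModType R[i]) (x : X) : R := complex.Re `|x|.

Definition dPhi (Phi : R -> \bar R) (x y : (X1 * X2)%type) : R :=
  Phi_inv Phi (Phi (rnorm (x.1 - y.1)%R) + Phi (rnorm (x.2 - y.2)%R))%E.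

Definition lin_subspace (M : set (X1 * X2)%type) : Prop :=
  M 0 /\ forall (a : R[i]) x y, M x -> M y -> M (a *: x + y).

Definition d_closed (d : (X1 * X2)%type -> (X1 * X2)%type -> R)
  (M : set (X1 * X2)%type) : Prop :=
  forall x, (forall e : R, 0 < e -> exists y, M y /\ d x y < e) -> M x.

Definition linear_on (M : set (X1 * X2)%type) (phi : (X1 * X2)%type -> R[i]) : Prop :=
  forall (a : R[i]) x y, M x -> M y -> phi (a *: x + y) = a * phi x + phi y.

Definition d_continuous_on (d : (X1 * X2)%type -> (X1 * X2)%type -> R)
  (M : set (X1 * X2)%type) (phi : (X1 * X2)%type -> R[i]) : Prop :=
  forall x, M x -> forall e : R, 0 < e -> exists2 del : R, 0 < del &
    forall y, M y -> d x y < del -> complex.Re `|phi y - phi x| < e.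

End DPhi.

(* A Young function Phi with the Mulholland condition is finite, continuous, strictly
   increasing and onto [0, +oo) on [0, +oo), so d_Phi((x1,x2),(y1,y2)) is the unique
   t >= 0 with Phi t = Phi ||x1 - y1|| + Phi ||x2 - y2||.  Hence d_Phi dominates each
   ||xk - yk||, and by convexity it is small as soon as both are.  So d_Phi and the
   seminorm l1 (x1, x2) = ||x1|| + ||x2|| define the same neighbourhoods of a point:
   a d_Phi-continuous linear functional on M is bounded by C * l1, the complex
   Hahn-Banach theorem extends it with the same bound, and that bound makes the
   extension d_Phi-continuous. *)

From HB Require Import structures.
From mathcomp Require Import all_boot all_order all_algebra.
From mathcomp Require Import all_classical all_reals all_analysis.
From mathcomp Require Import complex.
From mathcomp Require Import ring lra.
Import Order.TTheory GRing.Theory Num.Theory numFieldNormedType.Exports.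

Set Implicit Arguments.
Unset Strict Implicit.
Unset Printing Implicit Defensive.

Local Open Scope classical_set_scope.
Local Open Scope ring_scope.
Local Open Scope complex_scope.

Section YoungFunction.
Variables (R : realType) (Phi : R -> \bar R).
Hypotheses (hY : young_function Phi) (hM : mulholland Phi).

Lemma Phi_ge0 x : (0 <= Phi x)%E.
Proof. by case: hY => [[+ _] _ _ _ _]; apply. Qed.

Lemma Phi0 : Phi 0 = 0%E.
Proof. by case: hY => [[_ +] _ _ _ _]. Qed.

Lemma PhiN x : Phi (- x) = Phi x.
Proof. by case: hY => _ _ _ + _; apply. Qed.

Lemma Phi_lt_nneg : {in Num.nneg &, {homo Phi : x y / x < y >-> (x < y)%E}}.
Proof. by case: hM => _ Phi_lt _ x y; rewrite nnegrE => x0 _; apply: Phi_lt. Qed.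

Lemma Phi_le_nneg : {in Num.nneg &, {mono Phi : x y / x <= y >-> (x <= y)%E}}.
Proof. exact/le_mono_in/Phi_lt_nneg. Qed.

Lemma Phi_fin_num x : Phi x \is a fin_num.
Proof.
wlog x0 : x / 0 <= x.
  by move=> Hx; have [/Hx//|/ltW] := leP 0 x; rewrite -oppr_ge0 -PhiN => /Hx.
have := @Phi_lt_nneg x (x + 1); rewrite !nnegrE ltrDl ltr01 x0 addr_ge0 //.
by have := Phi_ge0 x; case: (Phi x) => //= _ /(_ isT isT isT); rewrite ltNge leey.
Qed.

Lemma PhiE x : Phi x = (fine (Phi x))%:E.
Proof. by rewrite fineK // Phi_fin_num. Qed.

Lemma fine_Phi_ge0 x : 0 <= fine (Phi x).
Proof. by have := Phi_ge0 x; rewrite PhiE lee_fin. Qed.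

Lemma fine_Phi_le : {in Num.nneg &, {mono fine \o Phi : x y / x <= y}}.
Proof. by move=> x y x0 y0 /=; rewrite -lee_fin -!PhiE Phi_le_nneg. Qed.

Lemma fine_Phi_lt : {in Num.nneg &, {mono fine \o Phi : x y / x < y}}.
Proof. exact/leW_mono_in/fine_Phi_le. Qed.

Lemma fine_Phi_convex x y (l : R) : 0 < l < 1 ->
  fine (Phi (l * x + (1 - l) * y)) <= l * fine (Phi x) + (1 - l) * fine (Phi y).
Proof.
case: hY => _ + _ _ _ => /(_ x y l) conv /conv.
by rewrite [Phi x]PhiE [Phi y]PhiE [Phi (_ + _)]PhiE -!EFinM -EFinD lee_fin.
Qed.

Lemma fine_Phi_onto v : 0 <= v -> exists2 t, 0 <= t & fine (Phi t) = v.
Proof.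
move=> v0; case: hY => _ _ _ _ /(_ v) [N HN].
pose b := Num.max N 0 + 1.
have b0 : 0 <= b by rewrite addr_ge0 // le_max lexx orbT.
have /HN : N < b by rewrite ltr_pwDr // le_max lexx.
rewrite PhiE lte_fin => vb.
have cont : {within `[0, b], continuous (fine \o Phi)}.
  have sub : `[0, b]%classic `<=` `[0, +oo[%classic.
    by move=> z /=; rewrite !in_itv /= andbT => /andP[].
  apply: (continuous_subspaceW sub); case: hM => PhiC _ _ z.
  by apply: fine_cvg; rewrite -PhiE; exact: PhiC.
have [|t t0b vt] := @IVT _ _ 0 b v b0 cont.
  by rewrite /= Phi0 /= ge_min le_max v0 (ltW vb) orbT.
by exists t; [case/andP: t0b | rewrite -vt].
Qed.

Lemma Phi_invD a b : 0 <= a -> 0 <= b ->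
  0 <= Phi_inv Phi (Phi a + Phi b)%E /\
  fine (Phi (Phi_inv Phi (Phi a + Phi b)%E)) = fine (Phi a) + fine (Phi b).
Proof.
move=> a0 b0; have [s s0 Phis] := fine_Phi_onto (addr_ge0 (fine_Phi_ge0 a) (fine_Phi_ge0 b)).
have [|t0 ->] := @xgetPex _ 0 [set t | 0 <= t /\ Phi t = (Phi a + Phi b)%E].
  by exists s; split => //; rewrite PhiE Phis EFinD -!PhiE.
by split; [exact: t0 | rewrite fineD ?Phi_fin_num].
Qed.

Lemma le_Phi_invD a b : 0 <= a -> 0 <= b ->
  Num.max a b <= Phi_inv Phi (Phi a + Phi b)%E.
Proof.
move=> a0 b0; have [t0 Phit] := Phi_invD a0 b0.
rewrite ge_max -(fine_Phi_le (a0 : a \in Num.nneg) t0).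
rewrite -(fine_Phi_le (b0 : b \in Num.nneg) t0) /= Phit.
by rewrite lerDl lerDr !fine_Phi_ge0.
Qed.

Lemma Phi_invD_small del : 0 < del -> exists2 eta, 0 < eta &
  forall a b, 0 <= a <= eta -> 0 <= b <= eta -> Phi_inv Phi (Phi a + Phi b)%E < del.
Proof.
move=> del0; exists (del / 4); first by rewrite divr_gt0.
move=> a b /andP[a0 a_le] /andP[b0 b_le]; have [t0 Phit] := Phi_invD a0 b0.
have eta0 : 0 <= del / 4 by rewrite divr_ge0 ?ltW.
(* convexity between 0 and del: 2 Phi (del / 4) <= Phi del / 2 < Phi del *)
have := @fine_Phi_convex del 0 4^-1; rewrite invr_gt0 ltr0n invf_lt1 ?ltr1n //=.
rewrite mulr0 addr0 Phi0 mulr0 addr0 mulrC => /(_ isT) conv.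
have := fine_Phi_le a0 eta0; have := fine_Phi_le b0 eta0; rewrite /= a_le b_le.
have Phidel : 0 < fine (Phi del).
  by have := fine_Phi_lt (lexx 0) (ltW del0); rewrite /= Phi0 del0.
rewrite -(fine_Phi_lt t0 (ltW del0 : del \in Num.nneg)) /= Phit; lra.
Qed.

End YoungFunction.

Section HahnBanach.
Variables (R : realType) (V : lmodType R) (p : V -> R) (M : set V) (u : V -> R).
Hypotheses (p_subadd : forall x y, p (x + y) <= p x + p y)
  (p_pos_homo : forall r x, 0 <= r -> p (r *: x) = r * p x)
  (M0 : M 0) (M_lin : forall r x y, M x -> M y -> M (r *: x + y))
  (u_lin : forall r x y, M x -> M y -> u (r *: x + y) = r * u x + u y)
  (u_le_p : forall x, M x -> u x <= p x).

(* Dominated partial extensions of [u], as graphs so that Zorn's lemma can be applied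
   to sets ordered by inclusion. *)
Definition extension_graph (G : set (V * R)) :=
  [/\ forall x a b, G (x, a) -> G (x, b) -> a = b,
      forall r x y a b, G (x, a) -> G (y, b) -> G (r *: x + y, r * a + b),
      forall x a, G (x, a) -> a <= p x &
      forall x, M x -> G (x, u x)].

Section ExtensionGraph.
Variables (G : set (V * R)) (hG : extension_graph G).

Lemma extension_graph0 : G (0, 0).
Proof.
case: hG => _ lin _ ext; have := lin (-1) _ _ _ _ (ext _ M0) (ext _ M0).
by rewrite scaleN1r addNr mulN1r addNr.
Qed.

Lemma extension_graphZ r x a : G (x, a) -> G (r *: x, r * a).
Proof.
by case: hG => _ lin _ _ Gx; have := lin r _ _ _ _ Gx extension_graph0; rewrite !addr0.
Qed.

Lemma extension_graphD x y a b : G (x, a) -> G (y, b) -> G (x + y, a + b).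
Proof. by case: hG => _ lin _ _ Gx Gy; have := lin 1 _ _ _ _ Gx Gy; rewrite scale1r mul1r. Qed.

Variables (z : V) (z_notin : forall a, ~ G (z, a)).

(* Any [c] between all [b - p (y - z)] and all [p (y' + z) - b'], for [(y, b)] and
   [(y', b')] in [G], is an admissible value at [z]; take the supremum of the former. *)
Let S := [set s | exists y b, G (y, b) /\ s = b - p (y - z)].

Let S_ub y' b' : G (y', b') -> ubound S (p (y' + z) - b').
Proof.
move=> Gy' _ [y [b [Gy ->]]]; case: hG => _ _ le _.
have := le _ _ (extension_graphD Gy Gy'); have := p_subadd (y - z) (y' + z).
by rewrite addrACA addNr addr0; lra.
Qed.

Let c := sup S.

Let c_ge y b : G (y, b) -> b - p (y - z) <= c.
Proof.
move=> Gy; apply: ub_le_sup; last by exists y, b.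
by exists (p (0 + z) - 0); apply/S_ub/extension_graph0.
Qed.

Let c_le y b : G (y, b) -> c <= p (y + z) - b.
Proof.
move=> Gy; apply: ge_sup; last exact: S_ub.
by exists (0 - p (0 - z)), 0, 0; split => //; apply: extension_graph0.
Qed.

Let H := [set q | exists y b t, G (y, b) /\ q = (y + t *: z, b + t * c)].

Let H_functional x a1 a2 : H (x, a1) -> H (x, a2) -> a1 = a2.
Proof.
case: hG => fG _ _ _.
move=> [y1 [b1 [t1 [G1 [ex1 ->]]]]] [y2 [b2 [t2 [G2 [ex2 ->]]]]].
have t12 : t1 = t2.
  apply/eqP/negPn/negP => t12; apply: (z_notin (a := (t1 - t2)^-1 * (b2 - b1))).
  have -> : z = (t1 - t2)^-1 *: (y2 - y1).
    have <- : (t1 - t2) *: z = y2 - y1.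
      apply/eqP; rewrite scalerBl subr_eq addrAC eq_sym subr_eq -ex2 ex1 addrC //.
    by rewrite scalerA mulVf ?subr_eq0 ?scale1r.
  apply: extension_graphZ; have := extension_graphD G2 (extension_graphZ (-1) G1).
  by rewrite scaleN1r mulN1r.
subst t2; have y12 : y1 = y2 by apply: (addIr (t1 *: z)); rewrite -ex1 -ex2.
by subst y2; rewrite (fG _ _ _ G1 G2).
Qed.

Let H_lin r x y a b : H (x, a) -> H (y, b) -> H (r *: x + y, r * a + b).
Proof.
case: hG => _ lin _ _ [y1 [b1 [t1 [G1 [-> ->]]]]] [y2 [b2 [t2 [G2 [-> ->]]]]].
exists (r *: y1 + y2), (r * b1 + b2), (r * t1 + t2); split; first exact: lin.
by congr (_, _); [rewrite scalerDr scalerA scalerDl addrACA | ring].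
Qed.

(* For [t != 0], scaling by [|t|^-1] reduces to the defining bounds of [c]. *)
Let H_le_p x a : H (x, a) -> a <= p x.
Proof.
case: hG => _ _ le _ [y [b [t [Gy [-> ->]]]]].
have [t0|t0|->] := ltgtP t 0; last by rewrite scale0r mul0r !addr0; apply: le.
- have s0 : 0 < - t by rewrite oppr_gt0.
  have := c_ge (extension_graphZ (- t)^-1 Gy).
  have -> : y + t *: z = - t *: ((- t)^-1 *: y - z).
    by rewrite scalerBr scalerA mulfV ?gt_eqF // scale1r scaleNr opprK.
  rewrite (p_pos_homo _ (ltW s0)) -(ler_pM2l s0) mulrBr mulrA mulfV ?gt_eqF //.
  lra.
- have := c_le (extension_graphZ t^-1 Gy).
  have -> : y + t *: z = t *: (t^-1 *: y + z).
    by rewrite scalerDr scalerA mulfV ?gt_eqF // scale1r.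
  rewrite (p_pos_homo _ (ltW t0)) -(ler_pM2l t0) mulrBr mulrA mulfV ?gt_eqF //.
  lra.
Qed.

Lemma extension_graph_grow : exists2 H, G `<` H & extension_graph H.
Proof.
have GH : G `<=` H by move=> [y b] Gy; exists y, b, 0; rewrite scale0r mul0r !addr0.
exists H; last split.
- split => // HG; apply: (z_notin (a := c)); apply: HG.
  by exists 0, 0, 1; rewrite scale1r mul1r !add0r; split => //; apply: extension_graph0.
- exact: H_functional.
- exact: H_lin.
- exact: H_le_p.
- by case: hG => _ _ _ ext x Mx; apply: GH; apply: ext.
Qed.

End ExtensionGraph.

(* [Zorn_bigcup] also takes the union of the empty chain. *)
Definition empty_or_extension_graph G := G = set0 \/ extension_graph G.

Lemma extension_graph_bigcup (F : set (set (V * R))) :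
  F `<=` empty_or_extension_graph -> total_on F subset ->
  empty_or_extension_graph (\bigcup_(G in F) G).
Proof.
move=> FP Ftot.
have [F0|/existsNP[G0 /not_implyP[FG0 G0_neq0]]] := pselect (forall G, F G -> G = set0).
  by left; apply/seteqP; split => q // [G FG]; rewrite (F0 G FG).
have graphP G q : F G -> G q -> extension_graph G by move=> /FP[-> []|].
have G0_graph : extension_graph G0 by case: (FP _ FG0) => // /G0_neq0.
right; split.
- move=> x a b [G1 F1 G1x] [G2 F2 G2x].
  have [G12|G21] := Ftot _ _ F1 F2.
    by case: (graphP _ _ F2 G2x) => fG2 _ _ _; apply: (fG2 x) => //; apply: G12.
  by case: (graphP _ _ F1 G1x) => fG1 _ _ _; apply: (fG1 x) => //; apply: G21.
- move=> r x y a b [G1 F1 G1x] [G2 F2 G2y].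
  have [G12|G21] := Ftot _ _ F1 F2.
    by exists G2 => //; case: (graphP _ _ F2 G2y) => _ lin _ _; apply: lin => //; apply: G12.
  by exists G1 => //; case: (graphP _ _ F1 G1x) => _ lin _ _; apply: lin => //; apply: G21.
- by move=> x a [G F1 Gx]; case: (graphP _ _ F1 Gx) => _ _ + _; apply.
- by move=> x Mx; exists G0 => //; case: G0_graph => _ _ _; apply.
Qed.

Theorem hahn_banach : exists U : V -> R,
  [/\ forall r x y, U (r *: x + y) = r * U x + U y,
      forall x, U x <= p x &
      forall x, M x -> U x = u x].
Proof.
have [G [[G0|hG] Gmax]] := Zorn_bigcup extension_graph_bigcup.
  have u_graph : extension_graph [set q | M q.1 /\ q.2 = u q.1].
    split => [x a b [_ /= ->] [_ /= ->] //|r x y a b [/= Mx ->] [/= My ->]||//].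
      by split; [apply: M_lin | rewrite /= u_lin].
    by move=> x a [/= Mx ->]; apply: u_le_p.
  exfalso; apply: (Gmax _ _ (or_intror u_graph)); rewrite G0; split => //.
  by move=> /(_ (0, u 0) (conj M0 erefl)).
have Gtot x : exists a, G (x, a).
  apply/not_existsP => x_notin.
  by have [H GH hH] := extension_graph_grow hG x_notin; apply: (Gmax H GH); right.
pose U x := xget 0 [set a | G (x, a)].
have GU x : G (x, U x) by apply: xgetPex (Gtot x).
case: hG => fG lin le ext; exists U; split.
- by move=> r x y; apply: (fG (r *: x + y)) => //; apply: lin.
- by move=> x; apply: le.
- by move=> x Mx; apply: (fG x) => //; apply: ext.
Qed.

End HahnBanach.

Section ComplexModulus.
Variable R : realType.
Implicit Types a b : R[i].

Lemma ReD a b : complex.Re (a + b) = complex.Re a + complex.Re b.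
Proof. by case: a; case: b. Qed.

Lemma Re_real_mul (r : R) a : complex.Re (r%:C * a) = r * complex.Re a.
Proof. by case: a => x y /=; rewrite mul0r subr0. Qed.

Lemma Re_normM a b : complex.Re `|a * b| = complex.Re `|a| * complex.Re `|b|.
Proof.
by rewrite normrM -[`|a|]RRe_real ?normr_real // Re_real_mul.
Qed.

Lemma Re_le_Re_norm a : complex.Re a <= complex.Re `|a|.
Proof. by have := normc_ge_Re a; rewrite lecE => /andP[_]; apply: le_trans (ler_norm _). Qed.

Lemma Re_norm_real (r : R) : complex.Re `|r%:C| = `|r|.
Proof. by rewrite normc_def /= expr0n addr0 sqrtr_sqr. Qed.

End ComplexModulus.

Section RestrictScalars.
Variables (R : realType) (V : lmodType R[i]).

Definition realV : Type := V.
HB.instance Definition _ := GRing.Zmodule.on realV.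

Definition real_scale (r : R) (x : realV) : realV := r%:C *: (x : V).

Fact real_scaleA a b x : real_scale a (real_scale b x) = real_scale (a * b) x.
Proof. by rewrite /real_scale scalerA rmorphM. Qed.

Fact real_scale1 : left_id 1 real_scale.
Proof. by move=> x; rewrite /real_scale rmorph1 scale1r. Qed.

Fact real_scaleDr : right_distributive real_scale +%R.
Proof. by move=> a x y; rewrite /real_scale scalerDr. Qed.

Fact real_scaleDl x : {morph real_scale^~ x : a b / a + b}.
Proof. by move=> a b; rewrite /real_scale rmorphD scalerDl. Qed.

HB.instance Definition _ := GRing.Zmodule_isLmodule.Build R realV
  real_scaleA real_scale1 real_scaleDr real_scaleDl.

Lemma realV_scaleE r (x : realV) : r *: x = r%:C *: (x : V).
Proof. by []. Qed.

End RestrictScalars.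
Arguments realV {R} V.

Section Complexification.
Variables (R : realType) (V : lmodType R[i]) (U : realV V -> R).
Hypothesis U_lin : forall r x y, U (r *: x + y) = r * U x + U y.

Definition complexify (w : V) : R[i] := Complex (U w) (- U ('i *: w)).

Let U0 : U 0 = 0.
Proof. by have := U_lin (-1) 0 0; rewrite scaler0 add0r mulN1r addNr. Qed.

Let UD (x y : V) : U (x + y) = U x + U y.
Proof. by have := U_lin 1 x y; rewrite scale1r mul1r. Qed.

Let UZ (r : R) (x : V) : U (r%:C *: x) = r * U x.
Proof. by have := U_lin r x 0; rewrite !addr0 U0 addr0. Qed.

Let UZc (a : R[i]) (x : V) : U (a *: x) = complex.Re a * U x + complex.Im a * U ('i *: x).
Proof.
have -> : a *: x = (complex.Re a)%:C *: x + (complex.Im a)%:C *: ('i *: x).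
  by rewrite scalerA -scalerDl mulrC -complexE.
by rewrite UD !UZ.
Qed.

Lemma complexify_linear (a : R[i]) (x y : V) :
  complexify (a *: x + y) = a * complexify x + complexify y.
Proof.
rewrite /complexify !(UD, scalerDr) scalerA (UZc a) (UZc ('i * a)).
by case: a => ar ai /=; simpc; congr Complex; ring.
Qed.

Lemma complexifyZ (a : R[i]) (x : V) : complexify (a *: x) = a * complexify x.
Proof.
have := complexify_linear a x 0; rewrite !addr0 => ->.
by rewrite /complexify scaler0 U0 oppr0 addr0.
Qed.

End Complexification.

Section ComplexHahnBanach.
Variables (R : realType) (V : lmodType R[i]) (p : V -> R) (M : set V) (phi : V -> R[i]).
Hypotheses (p_subadd : forall x y, p (x + y) <= p x + p y)
  (p_homo : forall a x, p (a *: x) = complex.Re `|a| * p x)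
  (M0 : M 0) (M_lin : forall a x y, M x -> M y -> M (a *: x + y))
  (phi_lin : forall a x y, M x -> M y -> phi (a *: x + y) = a * phi x + phi y)
  (Re_phi_le_p : forall x, M x -> complex.Re (phi x) <= p x).

Let p_ge0 x : 0 <= p x.
Proof.
have p0 : p 0 = 0 by rewrite -(scale0r x) p_homo normr0 mul0r.
have := p_subadd x ((-1) *: x); rewrite p_homo scaleN1r subrr p0 normrN normr1.
by rewrite mul1r; lra.
Qed.

Let phiZ a x : M x -> phi (a *: x) = a * phi x.
Proof.
move=> Mx; have := phi_lin (-1) M0 M0; rewrite scaler0 addr0 mulN1r addNr => phi0.
by have := phi_lin a Mx M0; rewrite !addr0 phi0 addr0.
Qed.

Let rotate_to_modulus (z : R[i]) : (`|z|^-1 * z^*) * z = `|z|.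
Proof.
have [->|z0] := eqVneq z 0; first by rewrite mulr0 normr0.
by rewrite -mulrA [z^* * _]mulrC -sqr_normc expr2 mulKf ?normr_eq0.
Qed.

Theorem complex_hahn_banach : exists phi' : V -> R[i],
  [/\ forall a x y, phi' (a *: x + y) = a * phi' x + phi' y,
      forall x, complex.Re `|phi' x| <= p x &
      forall x, M x -> phi' x = phi x].
Proof.
have [|r x||r x y Mx My|r x y Mx My|x Mx|U [U_lin U_le U_ext]] :=
  @hahn_banach R (realV V) p M (fun x => complex.Re (phi x)).
- exact: p_subadd.
- by move=> r0; rewrite realV_scaleE p_homo Re_norm_real ger0_norm.
- exact: M0.
- exact: M_lin.
- by rewrite /= realV_scaleE phi_lin // ReD Re_real_mul.
- exact: Re_phi_le_p.
exists (complexify U); split.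
- exact: complexify_linear.
- move=> x; set z := complexify U x.
  have [z0|z0] := eqVneq z 0; first by rewrite z0 normr0; apply: p_ge0.
  (* rotating [x] by the unimodular [|z|^-1 * z^*] turns [z] into the real [|z|] *)
  rewrite -rotate_to_modulus -complexifyZ //; apply: (le_trans (U_le _)).
  rewrite p_homo normrM normrV ?unitfE ?normr_eq0 // normr_id normcJ.
  by rewrite mulVf ?normr_eq0 //= mul1r.
- move=> x Mx; rewrite /complexify !U_ext //; last first.
    by have := M_lin 'i Mx M0; rewrite addr0.
  by rewrite phiZ //; case: (phi x) => a b /=; simpc.
Qed.
End ComplexHahnBanach.

Section SmallBall.
Variables (R : realType) (V : lmodType R[i]) (N : V -> R) (M : set V) (phi : V -> R[i]).
Hypotheses (N_homo : forall r x, 0 <= r -> N (r%:C *: x) = r * N x)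
  (M_scale : forall a x, M x -> M (a *: x))
  (phiZ : forall a x, M x -> phi (a *: x) = a * phi x).

Lemma bounded_of_small_ball eta : 0 < eta -> (forall x, 0 <= N x) ->
  (forall y, M y -> N y <= eta -> complex.Re `|phi y| < 1) ->
  forall y, M y -> complex.Re `|phi y| <= eta^-1 * N y.
Proof.
move=> eta0 N_ge0 phi_small y My; apply/ler_addgt0Pr => e e0.
have den0 : 0 < N y + e * eta by rewrite ltr_wpDl ?N_ge0 ?mulr_gt0.
pose lam := eta / (N y + e * eta).
have lam0 : 0 < lam by rewrite divr_gt0.
have Nlam : N (lam%:C *: y) <= eta.
  rewrite N_homo ?(ltW lam0) // /lam -mulrA ger_pMr // mulrC ler_pdivrMr //.
  by rewrite mul1r lerDl mulr_ge0 ?ltW.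
have := phi_small _ (M_scale lam%:C My) Nlam.
rewrite phiZ // Re_normM Re_norm_real gtr0_norm // => lt1.
have -> : eta^-1 * N y + e = lam^-1 by rewrite invf_div; field; rewrite gt_eqF.
by rewrite ltW // -(ltr_pM2l lam0) mulfV ?gt_eqF.
Qed.
End SmallBall.

Section RealNorm.
Variables (R : realType) (X : normedModType R[i]).

Lemma rnorm_ge0 (x : X) : 0 <= rnorm x.
Proof. by have := normr_ge0 x; rewrite lecE => /andP[]. Qed.

Lemma rnormD (x y : X) : rnorm (x + y) <= rnorm x + rnorm y.
Proof. by have := ler_normD x y; rewrite lecE -ReD => /andP[]. Qed.

Lemma rnormZ (a : R[i]) (x : X) : rnorm (a *: x) = complex.Re `|a| * rnorm x.
Proof. by rewrite /rnorm normrZ -[`|a|]RRe_real ?normr_real // Re_real_mul. Qed.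

Lemma rnormB (x y : X) : rnorm (x - y) = rnorm (y - x).
Proof. by rewrite /rnorm -normrN opprB. Qed.

End RealNorm.

Section Subspace.
Variables (R : realType) (X1 X2 : normedModType R[i]) (M : set (X1 * X2)%type).
Hypothesis M_sub : lin_subspace M.

Lemma lin_subspaceZ a x : M x -> M (a *: x).
Proof. by case: M_sub => M0 M_lin Mx; have := M_lin a x 0 Mx M0; rewrite addr0. Qed.

Lemma linear_on0 phi : linear_on M phi -> phi 0 = 0.
Proof.
case: M_sub => M0 _ phi_lin; have := phi_lin (-1) 0 0 M0 M0.
by rewrite scaler0 add0r mulN1r addNr.
Qed.

Lemma linear_onZ phi a x : linear_on M phi -> M x -> phi (a *: x) = a * phi x.
Proof.
move=> phi_lin Mx; have := phi_lin a x 0 Mx (proj1 M_sub).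
by rewrite !addr0 linear_on0 // addr0.
Qed.

End Subspace.

Section L1Norm.
Variables (R : realType) (X1 X2 : normedModType R[i]).
Implicit Types x y : (X1 * X2)%type.

Definition l1norm x : R := rnorm x.1 + rnorm x.2.

Lemma l1norm_ge0 x : 0 <= l1norm x.
Proof. by rewrite addr_ge0 ?rnorm_ge0. Qed.

Lemma l1normD x y : l1norm (x + y) <= l1norm x + l1norm y.
Proof. by rewrite /l1norm addrACA lerD ?rnormD. Qed.

Lemma l1normZ (a : R[i]) x : l1norm (a *: x) = complex.Re `|a| * l1norm x.
Proof. by rewrite /l1norm /= !rnormZ mulrDr. Qed.

Lemma l1normB x y : l1norm (x - y) = l1norm (y - x).
Proof. by rewrite /l1norm /= rnormB [rnorm (x.2 - _)]rnormB. Qed.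

Variables (Phi : R -> \bar R) (hY : young_function Phi) (hM : mulholland Phi).

Lemma l1norm_le_dPhi x y : l1norm (x - y) <= 2 * dPhi Phi x y.
Proof.
have := le_Phi_invD hY hM (rnorm_ge0 (x.1 - y.1)) (rnorm_ge0 (x.2 - y.2)).
by rewrite ge_max /l1norm /dPhi /= => /andP[]; lra.
Qed.

Lemma dPhi_lt_of_l1norm del : 0 < del -> exists2 eta, 0 < eta &
  forall x y, l1norm (x - y) <= eta -> dPhi Phi x y < del.
Proof.
move=> del0; have [eta eta0 small] := Phi_invD_small hY hM del0.
exists eta => // x y; rewrite /l1norm /= => le_eta; apply: small.
  by rewrite rnorm_ge0 /=; have := rnorm_ge0 (x.2 - y.2); lra.
by rewrite rnorm_ge0 /=; have := rnorm_ge0 (x.1 - y.1); lra.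
Qed.

Lemma dPhi_continuous_of_bounded (phi : (X1 * X2)%type -> R[i]) (C : R) :
  0 < C -> linear_on setT phi ->
  (forall x, complex.Re `|phi x| <= C * l1norm x) ->
  d_continuous_on (dPhi Phi) setT phi.
Proof.
move=> C0 phi_lin phi_le x _ e e0; exists (e / (2 * C)); first by rewrite divr_gt0 ?mulr_gt0.
move=> y _; rewrite ltr_pdivlMr ?mulr_gt0 // => dxy.
have -> : phi y - phi x = phi (y - x).
  by rewrite [y - x]addrC -[- x]scaleN1r phi_lin // mulN1r addrC.
apply: (le_lt_trans (phi_le _)); rewrite -l1normB.
have := l1norm_le_dPhi x y; rewrite -(ler_pM2l C0); nra.
Qed.

Lemma bounded_of_dPhi_continuous (M : set (X1 * X2)%type) (phi : (X1 * X2)%type -> R[i]) :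
  lin_subspace M -> linear_on M phi -> d_continuous_on (dPhi Phi) M phi ->
  exists2 C, 0 < C & forall x, M x -> complex.Re `|phi x| <= C * l1norm x.
Proof.
move=> M_sub phi_lin phi_cont; have M0 := proj1 M_sub.
have [del del0 phi_small] := phi_cont 0 M0 1 ltr01.
have [eta eta0 dPhi_small] := dPhi_lt_of_l1norm del0.
exists eta^-1; first by rewrite invr_gt0.
apply: (@bounded_of_small_ball _ _ l1norm) => //.
- by move=> r x r0; rewrite l1normZ Re_norm_real ger0_norm.
- exact: lin_subspaceZ.
- by move=> a x; apply: linear_onZ.
- exact: l1norm_ge0.
- move=> y My le_eta; have := phi_small y My (dPhi_small 0 y _).
  by rewrite (linear_on0 M_sub phi_lin) subr0; apply; rewrite l1normB subr0.
Qed.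

End L1Norm.

Theorem mainTheorem6 (R : realType) (X1 X2 : completeNormedModType R[i])
  (Phi : R -> \bar R) :
  young_function Phi -> mulholland Phi ->
  forall (M : set (X1 * X2)%type) (phi : (X1 * X2)%type -> R[i]),
    lin_subspace M -> d_closed (dPhi Phi) M ->
    linear_on M phi -> d_continuous_on (dPhi Phi) M phi ->
    exists phi' : (X1 * X2)%type -> R[i],
      [/\ linear_on setT phi', d_continuous_on (dPhi Phi) setT phi' &
          forall x, M x -> phi' x = phi x].
Proof.
move=> hY hM M phi M_sub _ phi_lin phi_cont; have [M0 M_lin] := M_sub.
have [C C0 phi_le] := bounded_of_dPhi_continuous hY hM M_sub phi_lin phi_cont.
pose p (x : X1 * X2) := C * l1norm x.
have p_subadd x y : p (x + y) <= p x + p y by rewrite -mulrDr ler_pM2l // l1normD.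
have p_homo a x : p (a *: x) = complex.Re `|a| * p x by rewrite /p l1normZ mulrCA.
have Re_phi_le x : M x -> complex.Re (phi x) <= p x.
  by move=> Mx; apply: le_trans (Re_le_Re_norm _) (phi_le x Mx).
have [phi' [phi'_lin phi'_le phi'_ext]] :=
  complex_hahn_banach p_subadd p_homo M0 M_lin phi_lin Re_phi_le.
have phi'_lin_on : linear_on setT phi' by move=> a x y _ _; apply: phi'_lin.
exists phi'; split => //; by apply: (dPhi_continuous_of_bounded hY hM C0 phi'_lin_on).
Qed.
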